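(* For any deterministic automata $G=(X,\Sigma,\longrightarrow,X_0)$ and $R=(Z,\Sigma,\longrightarrow,Z_0)$, there exists a $\Sigma_{uc}$-admissible supervisor $S$ with $S\|G\sqsubseteq_{cc}R$ if and only if $G\sqsubseteq_{ucr}R$.
   Context: An automaton is a 4-tuple $A=(Q,\Sigma,\longrightarrow,Q_0)$ with state set $Q$, finite event set $\Sigma$, ${\longrightarrow}\subseteq Q\times\Sigma\times Q$ and $\emptyset\neq Q_0\subseteq Q$; write $q\xrightarrow{\sigma}q'$ for $(q,\sigma,q')\in{\longrightarrow}$, $q\xrightarrow{\sigma}$ if some such $q'$ exists, extended to strings. It is deterministic if $|Q_0|=1$ and each state has at most one $\sigma$-successor for each $\sigma$. A state is reachable if reached from an initial state by some string. Events are partitioned into uncontrollable $\Sigma_{uc}$ and controllable $\Sigma_c$; $\Sigma_r\subseteq\Sigma$ is a fixed set of required events. For a supervisor (automaton) $S=(Y,\Sigma,\longrightarrow,Y_0)$, $S\|G=(Y\times X,\Sigma,\longrightarrow,Y_0\times X_0)$ with $(y,x)\xrightarrow{\sigma}(y',x')$ iff $y\xrightarrow{\sigma}y'$ and $x\xrightarrow{\sigma}x'$; $S$ is $\Sigma_{uc}$-admissible w.r.t. $G$ if for every reachable $(y,x)$ of $S\|G$ and $\sigma\in\Sigma_{uc}$, $x\xrightarrow{\sigma}$ implies $(y,x)\xrightarrow{\sigma}$. For automata $A_1,A_2$ with state sets $Q_1,Q_2$, initial sets $Q_{01},Q_{02}$, and $\Phi\subseteq Q_1\times Q_2$, consider: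 (initial state) every $q_0\in Q_{01}$ has $p_0\in Q_{02}$ with $(q_0,p_0)\in\Phi$; ($\Sigma'$-forward) for $(q,p)\in\Phi$, $\sigma\in\Sigma'$, $q\xrightarrow{\sigma}q'$ there is $p'$ with $p\xrightarrow{\sigma}p'$, $(q',p')\in\Phi$; ($\Sigma_r$-backward) for $(q,p)\in\Phi$, $\sigma\in\Sigma_r$, $p\xrightarrow{\sigma}p'$ there is $q'$ with $q\xrightarrow{\sigma}q'$, $(q',p')\in\Phi$. $\Phi$ is a cc-simulation if it satisfies (initial state), ($\Sigma$-forward) and ($\Sigma_r$-backward), and a $\Sigma_{ucr}$-simulation if it satisfies (initial state), ($\Sigma_{uc}$-forward) and ($\Sigma_r$-backward). $A_1\sqsubseteq_{cc}A_2$ (resp. $A_1\sqsubseteq_{ucr}A_2$) means such a relation exists. *)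

From mathcomp Require Import all_boot.
Set Implicit Arguments.
Unset Strict Implicit.
Unset Printing Implicit Defensive.

Record automaton (E : finType) (Q : Type) := Automaton {
  trans : Q -> E -> Q -> Prop;
  init : Q -> Prop;
  init_nonempty : exists q, init q
}.

Section Defs.
Variable E : finType.

Definition deterministic (Q : Type) (A : automaton E Q) : Prop :=
  (exists q0, init A q0 /\ forall q, init A q -> q = q0) /\
  (forall q s q1 q2, trans A q s q1 -> trans A q s q2 -> q1 = q2).

Inductive trans_str (Q : Type) (A : automaton E Q) : Q -> seq E -> Q -> Prop :=
| trans_str_nil q : trans_str A q [::] q
| trans_str_cons q s q' w q'' :
    trans A q s q' -> trans_str A q' w q'' -> trans_str A q (s :: w) q''.

Definition reachable (Q : Type) (A : automaton E Q) (q : Q) : Prop :=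
  exists q0 w, init A q0 /\ trans_str A q0 w q.

Lemma sync_init_nonempty (Y X : Type) (S : automaton E Y) (G : automaton E X) :
  exists p : Y * X, init S p.1 /\ init G p.2.
Proof.
case: (init_nonempty S) => y Hy; case: (init_nonempty G) => x Hx.
by exists (y, x).
Qed.

Definition sync (Y X : Type) (S : automaton E Y) (G : automaton E X)
  : automaton E (Y * X) :=
  @Automaton E (Y * X)
    (fun p s p' => trans S p.1 s p'.1 /\ trans G p.2 s p'.2)
    (fun p => init S p.1 /\ init G p.2)
    (sync_init_nonempty S G).

Definition admissible (uc : pred E) (Y X : Type)
  (S : automaton E Y) (G : automaton E X) : Prop :=
  forall y x, reachable (sync S G) (y, x) ->
  forall s, uc s -> (exists x', trans G x s x') ->
  exists p', trans (sync S G) (y, x) s p'.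

Definition init_cond (Q1 Q2 : Type) (A1 : automaton E Q1) (A2 : automaton E Q2)
  (Phi : Q1 -> Q2 -> Prop) : Prop :=
  forall q0, init A1 q0 -> exists p0, init A2 p0 /\ Phi q0 p0.

Definition forward_cond (Sig : pred E) (Q1 Q2 : Type)
  (A1 : automaton E Q1) (A2 : automaton E Q2) (Phi : Q1 -> Q2 -> Prop) : Prop :=
  forall q p, Phi q p -> forall s, Sig s -> forall q', trans A1 q s q' ->
  exists p', trans A2 p s p' /\ Phi q' p'.

Definition backward_cond (Sr : pred E) (Q1 Q2 : Type)
  (A1 : automaton E Q1) (A2 : automaton E Q2) (Phi : Q1 -> Q2 -> Prop) : Prop :=
  forall q p, Phi q p -> forall s, Sr s -> forall p', trans A2 p s p' ->
  exists q', trans A1 q s q' /\ Phi q' p'.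

Definition cc_simulation (Sr : pred E) (Q1 Q2 : Type)
  (A1 : automaton E Q1) (A2 : automaton E Q2) (Phi : Q1 -> Q2 -> Prop) : Prop :=
  init_cond A1 A2 Phi /\ forward_cond predT A1 A2 Phi /\ backward_cond Sr A1 A2 Phi.

Definition ucr_simulation (uc Sr : pred E) (Q1 Q2 : Type)
  (A1 : automaton E Q1) (A2 : automaton E Q2) (Phi : Q1 -> Q2 -> Prop) : Prop :=
  init_cond A1 A2 Phi /\ forward_cond uc A1 A2 Phi /\ backward_cond Sr A1 A2 Phi.

Definition cc_sim_le (Sr : pred E) (Q1 Q2 : Type)
  (A1 : automaton E Q1) (A2 : automaton E Q2) : Prop :=
  exists Phi, cc_simulation Sr A1 A2 Phi.

Definition ucr_sim_le (uc Sr : pred E) (Q1 Q2 : Type)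
  (A1 : automaton E Q1) (A2 : automaton E Q2) : Prop :=
  exists Phi, ucr_simulation uc Sr A1 A2 Phi.

End Defs.

From mathcomp Require Import all_boot.

Set Implicit Arguments.
Unset Strict Implicit.
Unset Printing Implicit Defensive.

(* From a supervisor S with S || G cc-simulated by R, project the reachable
   part of the cc-simulation onto the plant states: admissibility lets S || G
   follow every uncontrollable move of G, and determinism of G makes it land in
   the same plant state. Conversely, given a ucr-simulation Phi of G by R, the
   supervisor runs G and R in lockstep and enables only the moves that stay
   inside Phi; determinism of G keeps the supervisor's copy of the plant state
   equal to the plant state, so admissibility is the Sigma_uc-forward condition
   of Phi. *)

Section Reachability.
Variables (E : finType) (Q : Type) (A : automaton E Q).

Lemma trans_str_rcons q0 w q s q' :
  trans_str A q0 w q -> trans A q s q' -> trans_str A q0 (rcons w s) q'.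
Proof.
elim=> [p|p s0 p1 w0 p2 Hp _ IH] Hq /=.
- exact: trans_str_cons Hq (trans_str_nil _ _).
- exact: trans_str_cons Hp (IH Hq).
Qed.

Lemma reachable_init q : init A q -> reachable A q.
Proof. by move=> Hq; exists q, [::]; split => //; constructor. Qed.

Lemma reachable_step q s q' : reachable A q -> trans A q s q' -> reachable A q'.
Proof.
case=> q0 [w [Hq0 Hw]] Hq; exists q0, (rcons w s); split => //.
exact: trans_str_rcons Hw Hq.
Qed.

Lemma reachable_ind (P : Q -> Prop) :
  (forall q, init A q -> P q) ->
  (forall q s q', P q -> trans A q s q' -> P q') ->
  forall q, reachable A q -> P q.
Proof.
move=> Pinit Pstep q [q0 [w [Hq0 Hw]]].
have : P q0 by exact: Pinit.
by elim: Hw {Hq0} => // p s p1 w0 p2 Hp _ IH /(Pstep _ _ _)/(_ Hp).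
Qed.

End Reachability.

Lemma forward_condW (E : finType) (Sig1 Sig2 : pred E) (Q1 Q2 : Type)
    (A1 : automaton E Q1) (A2 : automaton E Q2) (Phi : Q1 -> Q2 -> Prop) :
  {subset Sig1 <= Sig2} -> forward_cond Sig2 A1 A2 Phi -> forward_cond Sig1 A1 A2 Phi.
Proof. by move=> sub12 F q p Hqp s /sub12; apply: F. Qed.

Section ProjectSimulation.
Variables (E : finType) (Y X Z : Type).
Variables (S : automaton E Y) (G : automaton E X) (R : automaton E Z).
Variable Psi : Y * X -> Z -> Prop.

Definition reachable_proj (x : X) (z : Z) : Prop :=
  exists y, reachable (sync S G) (y, x) /\ Psi (y, x) z.

Lemma init_cond_proj : init_cond (sync S G) R Psi -> init_cond G R reachable_proj.
Proof.
move=> Pinit x Hx; case: (init_nonempty S) => y Hy.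
have Hyx : init (sync S G) (y, x) by [].
case: (Pinit _ Hyx) => z [Hz Hyxz]; exists z; split => //.
by exists y; split => //; apply: reachable_init.
Qed.

Lemma forward_cond_proj (uc : pred E) :
  (forall x s x1 x2, trans G x s x1 -> trans G x s x2 -> x1 = x2) ->
  admissible uc S G -> forward_cond uc (sync S G) R Psi ->
  forward_cond uc G R reachable_proj.
Proof.
move=> Gdet Sadm Pfwd x z [y [Hyx Hyxz]] s Hs x' Hx'.
have [[y' x''] [HSy /= HGx]] := Sadm y x Hyx s Hs (ex_intro _ x' Hx').
have Ex : x'' = x' by exact: Gdet HGx Hx'.
subst x''.
have [z' [Hz' Hyxz']] := Pfwd _ _ Hyxz s Hs (y', x') (conj HSy HGx).
exists z'; split => //; exists y'; split => //.
exact: reachable_step Hyx (conj HSy HGx).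
Qed.

Lemma backward_cond_proj (Sr : pred E) :
  backward_cond Sr (sync S G) R Psi -> backward_cond Sr G R reachable_proj.
Proof.
move=> Pbwd x z [y [Hyx Hyxz]] s Hs z' Hz'.
have [[y' x'] [Hstep Hyxz']] := Pbwd _ _ Hyxz s Hs z' Hz'.
exists x'; split; first exact: Hstep.2.
by exists y'; split => //; apply: reachable_step Hyx Hstep.
Qed.

End ProjectSimulation.

Section LockstepSupervisor.
Variables (E : finType) (X Z : Type) (G : automaton E X) (R : automaton E Z).
Variable Phi : X -> Z -> Prop.
Hypothesis Phi_init : init_cond G R Phi.

Lemma lockstep_init_nonempty :
  exists p : X * Z, [/\ init G p.1, init R p.2 & Phi p.1 p.2].
Proof.
case: (init_nonempty G) => x Hx; case: (Phi_init Hx) => z [Hz Hxz].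
by exists (x, z).
Qed.

Definition lockstep : automaton E (X * Z) :=
  @Automaton E (X * Z)
    (fun p s p' => [/\ trans G p.1 s p'.1, trans R p.2 s p'.2 & Phi p'.1 p'.2])
    (fun p => [/\ init G p.1, init R p.2 & Phi p.1 p.2])
    lockstep_init_nonempty.

Hypothesis G_det : deterministic G.

Lemma reachable_lockstep q :
  reachable (sync lockstep G) q -> q.2 = q.1.1 /\ Phi q.1.1 q.1.2.
Proof.
have [[x0 [_ Ginit]] Gtrans] := G_det.
move: q; apply: reachable_ind.
- move=> [[x z] x'] [] [] /= Hx _ Hxz Hx'.
  by split=> //; rewrite (Ginit _ Hx) (Ginit _ Hx').
- move=> [[x z] x'] s [[x1 z1] x1'] /= [-> _] [] [] /= Hx1 _ Hx1z1 Hx1'.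
  by split=> //; apply: Gtrans Hx1' Hx1.
Qed.

Lemma admissible_lockstep (uc : pred E) :
  forward_cond uc G R Phi -> admissible uc lockstep G.
Proof.
move=> Phi_fwd [x z] x'' Hr s Hs [x' Hx'].
have [/= Ex Hxz] := reachable_lockstep Hr; subst x''.
have [z' [Hz' Hxz']] := Phi_fwd _ _ Hxz s Hs x' Hx'.
by exists ((x', z'), x').
Qed.

Definition lockstep_sim (q : (X * Z) * X) (z : Z) : Prop :=
  reachable (sync lockstep G) q /\ z = q.1.2.

Lemma cc_simulation_lockstep (Sr : pred E) :
  backward_cond Sr G R Phi -> cc_simulation Sr (sync lockstep G) R lockstep_sim.
Proof.
move=> Phi_bwd; split; [|split].
- move=> q Hq; exists q.1.2; split; first by case: Hq => -[].
  by split=> //; apply: reachable_init.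
- move=> q _ [Hq ->] s _ q' Hstep; exists q'.1.2; split; first by case: Hstep => -[].
  by split=> //; apply: reachable_step Hq Hstep.
- move=> [[x z] x''] _ [Hr ->] s Hs z' Hz'.
  have [/= Ex Hxz] := reachable_lockstep Hr; subst x''.
  have [x' [Hx' Hxz']] := Phi_bwd _ _ Hxz s Hs z' Hz'.
  have Hstep : trans (sync lockstep G) ((x, z), x) s ((x', z'), x') by [].
  by exists ((x', z'), x'); split=> //; split=> //; apply: reachable_step Hr Hstep.
Qed.

End LockstepSupervisor.

Theorem corollary1 (E : finType) (uc Sr : pred E)
  (X Z : Type) (G : automaton E X) (R : automaton E Z) :
  deterministic G -> deterministic R ->
  ((exists (Y : Type) (S : automaton E Y),
      admissible uc S G /\ cc_sim_le Sr (sync S G) R)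
   <-> ucr_sim_le uc Sr G R).
Proof.
move=> G_det _; split.
- move=> [Y [S [Sadm [Psi [Pinit [Pfwd Pbwd]]]]]].
  exists (reachable_proj S G Psi); split; [|split].
  + exact: init_cond_proj.
  + apply: forward_cond_proj G_det.2 Sadm _.
    by apply: forward_condW Pfwd.
  + exact: backward_cond_proj.
- move=> [Phi [Pinit [Pfwd Pbwd]]].
  exists (X * Z)%type, (lockstep Pinit); split.
  + exact: admissible_lockstep.
  + by exists (lockstep_sim Pinit); apply: cc_simulation_lockstep.
Qed.
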